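(* For all integers $n,k\ge1$, no closed abstraction belongs to $\llbracket\sharp(\mathbb B^{n+k})\multimap(\sharp(\mathbb B^n)\times\sharp(\mathbb B^k))\rrbracket_\emptyset$; that is, the type $\sharp(\mathbb B^{n+k})\multimap(\sharp(\mathbb B^n)\times\sharp(\mathbb B^k))$ is uninhabited.
   Context: **Syntax.** Terms: $t ::= x \mid |0\rangle \mid |1\rangle \mid \mathsf{if}\ t\ \mathsf{then}\ \vec s\ \mathsf{else}\ \vec s \mid \lambda x.\vec t \mid t\,t \mid (t,t) \mid \mathsf{let}\ (x,y)=t\ \mathsf{in}\ \vec t$. Superpositions: $\vec t ::= t \mid \vec 0 \mid \alpha\cdot\vec t \mid \vec t+\vec t$, with $\alpha$ an algebraic complex number. Basis values: $v ::= |0\rangle\mid|1\rangle\mid\lambda x.\vec t\mid(v,v)$. Values are superpositions of basis values. **Equivalence.** Superpositions are taken modulo the vector-space congruence $\equiv$: $+$ is commutative and associative, $\vec0$ is neutral, $0\cdot\vec t\equiv\vec0$, $1\cdot\vec t\equiv\vec t$, $\alpha\cdot(\beta\cdot\vec t)\equiv\alpha\beta\cdot\vec t$, $\alpha\cdot\vec t+\beta\cdot\vec t\equiv(\alpha+\beta)\cdot\vec t$, and $\alpha\cdot(\vec t_1+\vec t_2)\equiv\alpha\cdot\vec t_1+\alpha\cdot\vec t_2$. **Linear extension.** Constructors are extended linearly in their evaluated positions: - $s(\sum_i\alpha_i t_i)\triangleq\sum_i\alpha_i\cdot s\,t_i$; - $(\sum_i\alpha_is_i,\sum_j\beta_jt_j)\triangleq\sum_{i,j}\alpha_i\beta_j\cdot(s_i,t_j)$;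 - $\mathsf{if}$ and $\mathsf{let}$ distribute over a superposed guard or scrutinee. **Reduction $\rightsquigarrow$ (call-by-value, on closed superpositions).** - $\mathsf{if}\ |0\rangle\ \mathsf{then}\ \vec s\ \mathsf{else}\ \vec t\rightsquigarrow\vec s$ and $\mathsf{if}\ |1\rangle\ \mathsf{then}\ \vec s\ \mathsf{else}\ \vec t\rightsquigarrow\vec t$. - $(\lambda x.\vec t)\,v\rightsquigarrow\vec t[v/x]$ for a basis value $v$. - $\mathsf{let}\ (x,y)=(v,w)\ \mathsf{in}\ \vec t\rightsquigarrow\vec t[v/x,w/y]$. - Congruence rules reduce, using the linear extension: inside the guard of $\mathsf{if}$; in the argument of an application; in the function position when the argument is a basis value; in the first component of a pair; in the second component when the first is a basis value; and in the scrutinee of $\mathsf{let}$. - A superposition in canonical form $\sum_i\alpha_it_i+\sum_j\beta_jv_j$ reduces to $\sum_i\alpha_is_i+\sum_j\beta_jv_j$ when each $t_i\rightsquigarrow s_i$. Canonical form means: the superposed terms are pairwise distinct and all coefficients are nonzero. - Reduction is closed under $\equiv$. $\rightsquigarrow^*$ denotes the reflexive transitive closure of $\rightsquigarrow$. **Inner product and unit values.** On closed values, $\langle\sum_i\alpha_iv_i\mid\sum_j\beta_jw_j\rangle=\sum_{i,j}\overline{\alpha_i}\beta_j\delta_{v_i,w_j}$, where $\delta$ is the Kronecker delta on basis values. Let $\mathcal S_1$ be the set of closed values $\vec v$ with $|\langle\vec v|\vec v\rangle|^2=1$. **Base and span.** $\mathrm{base}(\vec v)$ is the set of basis values occurring with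 nonzero coefficient in $\vec v$. For a set $S$ of closed values, $\flat S=\bigcup_{\vec v\in S}\mathrm{base}(\vec v)$, and $\mathsf{span}(S)$ is the set of finite linear combinations of elements of $S$. **Realizability.** $\vec t\Vdash S$ iff $\vec t\rightsquigarrow^*\vec v$ for some $\vec v\in S$ (up to $\equiv$). **Types.** $A ::= X\mid A\multimap A\mid A\Rightarrow A\mid A\times A\mid Q\mid\S A\mid\forall X.A$, where ground types are $Q ::= \mathbb B\mid\sharp Q\mid\S Q\mid Q\times Q$. **Unitary semantics** (for $\tau$ mapping type variables to subsets of $\mathcal S_1$): - $\llbracket X\rrbracket_\tau=\tau(X)$; - $\llbracket\mathbb B\rrbracket_\tau=\{|0\rangle,|1\rangle\}$; - $\llbracket\sharp A\rrbracket_\tau=\mathsf{span}(\llbracket A\rrbracket_\tau)\cap\mathcal S_1$; - $\llbracket\S A\rrbracket_\tau=\llbracket A\rrbracket_\tau$; - $\llbracket A\multimap B\rrbracket_\tau=\{\lambda x.\vec t:\forall\vec v\in\llbracket A\rrbracket_\tau,(\lambda x.\vec t)\vec v\Vdash\llbracket B\rrbracket_\tau\}$; - $\llbracket A\Rightarrow B\rrbracket_\tau=\{\lambda x.\vec t:\forall v\in\flat\llbracket A\rrbracket_\tau,(\lambda x.\vec t)v\Vdash\llbracket B\rrbracket_\tau\}$; - $\llbracket A\times B\rrbracket_\tau=\{(\vec v,\vec w):\vec v\in\llbracket A\rrbracket_\tau,\vec w\in\llbracket B\rrbracket_\tau\}$; - $\llbracket\forall X.A\rrbracket_\tau=\bigcap_{R\subseteq\mathcal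 S_1}\llbracket A\rrbracket_{\tau\cup\{X\mapsto R\}}$. **Qubit notation.** $\mathbb B^1=\mathbb B$ and $\mathbb B^{m+1}=\mathbb B\times\mathbb B^m$. For $0\le i<2^n$ with binary digits $i_1\dots i_n$, let $|i\rangle\triangleq(|i_1\rangle,(|i_2\rangle,\dots(|i_{n-1}\rangle,|i_n\rangle)\dots))$. *)

From Stdlib Require Import Classical ClassicalEpsilon List.
From mathcomp Require Import all_boot all_order all_algebra all_field.
Set Implicit Arguments. Unset Strict Implicit. Unset Printing Implicit Defensive.
Import Order.TTheory GRing.Theory Num.Theory.
Local Open Scope ring_scope.

Inductive term : Type :=
| Var  : nat -> term
| Ket0 : term
| Ket1 : term
| If   : term -> sup -> sup -> term
| Lam  : nat -> sup -> term
| App  : term -> term -> term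
| Pair : term -> term -> term
| Let  : nat -> nat -> term -> sup -> term
with sup : Type :=
| STm    : term -> sup
| SZero  : sup
| SScale : algC -> sup -> sup
| SAdd   : sup -> sup -> sup.

Inductive teq : term -> term -> Prop :=
| teq_refl  : forall t, teq t t
| teq_sym   : forall t u, teq t u -> teq u t
| teq_trans : forall t u w, teq t u -> teq u w -> teq t w
| teq_If    : forall g g' s1 s1' s2 s2', teq g g' -> sequiv s1 s1' -> sequiv s2 s2' ->
                teq (If g s1 s2) (If g' s1' s2')
| teq_Lam   : forall x b b', sequiv b b' -> teq (Lam x b) (Lam x b')
| teq_App   : forall a a' c c', teq a a' -> teq c c' -> teq (App a c) (App a' c')
| teq_Pair  : forall a a' c c', teq a a' -> teq c c' -> teq (Pair a c) (Pair a' c')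
| teq_Let   : forall x y u u' b b', teq u u' -> sequiv b b' -> teq (Let x y u b) (Let x y u' b')
with sequiv : sup -> sup -> Prop :=
| seq_refl  : forall s, sequiv s s
| seq_sym   : forall s r, sequiv s r -> sequiv r s
| seq_trans : forall s r q, sequiv s r -> sequiv r q -> sequiv s q
| seq_STm   : forall t t', teq t t' -> sequiv (STm t) (STm t')
| seq_Scale : forall a s s', sequiv s s' -> sequiv (SScale a s) (SScale a s')
| seq_Add   : forall s1 s1' s2 s2', sequiv s1 s1' -> sequiv s2 s2' ->
                sequiv (SAdd s1 s2) (SAdd s1' s2')
| seq_comm  : forall s r, sequiv (SAdd s r) (SAdd r s)
| seq_assoc : forall s r q, sequiv (SAdd s (SAdd r q)) (SAdd (SAdd s r) q)
| seq_zeroN : forall s, sequiv (SAdd SZero s) s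
| seq_scale0 : forall s, sequiv (SScale 0 s) SZero
| seq_scale1 : forall s, sequiv (SScale 1 s) s
| seq_scaleM : forall a b s, sequiv (SScale a (SScale b s)) (SScale (a * b) s)
| seq_scaleDl : forall a b s, sequiv (SAdd (SScale a s) (SScale b s)) (SScale (a + b) s)
| seq_scaleDr : forall a s r, sequiv (SScale a (SAdd s r)) (SAdd (SScale a s) (SScale a r)).

Fixpoint cl_t (bs : seq nat) (t : term) : bool :=
  match t with
  | Var x => x \in bs
  | Ket0 | Ket1 => true
  | If g s1 s2 => [&& cl_t bs g, cl_s bs s1 & cl_s bs s2]
  | Lam x b => cl_s (x :: bs) b
  | App a c => cl_t bs a && cl_t bs c
  | Pair a c => cl_t bs a && cl_t bs c
  | Let x y u b => cl_t bs u && cl_s (x :: y :: bs) b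
  end
with cl_s (bs : seq nat) (s : sup) : bool :=
  match s with
  | STm t => cl_t bs t
  | SZero => true
  | SScale _ s' => cl_s bs s'
  | SAdd s1 s2 => cl_s bs s1 && cl_s bs s2
  end.
Definition closed_t (t : term) : bool := cl_t [::] t.
Definition closed_s (s : sup) : bool := cl_s [::] s.

Fixpoint bval (t : term) : Prop :=
  match t with
  | Ket0 | Ket1 => True
  | Lam _ _ => True
  | Pair a c => bval a /\ bval c
  | _ => False
  end.
Fixpoint syn_value (s : sup) : Prop :=
  match s with
  | STm t => bval t
  | SZero => True
  | SScale _ s' => syn_value s'
  | SAdd s1 s2 => syn_value s1 /\ syn_value s2
  end.

Fixpoint subst_t (t : term) (x : nat) (v : term) : term :=
  match t with
  | Var y => if y == x then v else Var y
  | Ket0 => Ket0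
  | Ket1 => Ket1
  | If g s1 s2 => If (subst_t g x v) (subst_s s1 x v) (subst_s s2 x v)
  | Lam y b => if y == x then Lam y b else Lam y (subst_s b x v)
  | App a c => App (subst_t a x v) (subst_t c x v)
  | Pair a c => Pair (subst_t a x v) (subst_t c x v)
  | Let y z u b => Let y z (subst_t u x v)
                     (if (y == x) || (z == x) then b else subst_s b x v)
  end
with subst_s (s : sup) (x : nat) (v : term) : sup :=
  match s with
  | STm t => STm (subst_t t x v)
  | SZero => SZero
  | SScale a s' => SScale a (subst_s s' x v)
  | SAdd s1 s2 => SAdd (subst_s s1 x v) (subst_s s2 x v)
  end.

Fixpoint smap (f : term -> term) (s : sup) : sup :=
  match s with
  | STm t => STm (f t)
  | SZero => SZero
  | SScale a s' => SScale a (smap f s')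
  | SAdd s1 s2 => SAdd (smap f s1) (smap f s2)
  end.
Fixpoint sbind (f : term -> sup) (s : sup) : sup :=
  match s with
  | STm t => f t
  | SZero => SZero
  | SScale a s' => SScale a (sbind f s')
  | SAdd s1 s2 => SAdd (sbind f s1) (sbind f s2)
  end.
(* (sum_i a_i v_i , sum_j b_j w_j) := sum_{i,j} a_i b_j (v_i, w_j) *)
Definition pair_sup (v w : sup) : sup := sbind (fun a => smap (Pair a) w) v.
Definition app_sup (f : term) (v : sup) : sup := smap (App f) v.

Definition tsum (l : list (algC * term)) : sup :=
  foldr (fun p acc => SAdd (SScale p.1 (STm p.2)) acc) SZero l.
Definition ssum (l : list (algC * sup)) : sup :=
  foldr (fun p acc => SAdd (SScale p.1 p.2) acc) SZero l.

Inductive tred : term -> sup -> Prop :=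
| r_if0   : forall s1 s2, tred (If Ket0 s1 s2) s1
| r_if1   : forall s1 s2, tred (If Ket1 s1 s2) s2
| r_beta  : forall x b v, bval v -> tred (App (Lam x b) v) (subst_s b x v)
| r_let   : forall x y v w b, bval v -> bval w ->
              tred (Let x y (Pair v w) b) (subst_s (subst_s b x v) y w)
| r_ifc   : forall g g' s1 s2, tred g g' -> tred (If g s1 s2) (smap (fun h => If h s1 s2) g')
| r_appR  : forall a c c', tred c c' -> tred (App a c) (smap (App a) c')
| r_appL  : forall a a' c, bval c -> tred a a' -> tred (App a c) (smap (fun h => App h c) a')
| r_pairL : forall a a' c, tred a a' -> tred (Pair a c) (smap (fun h => Pair h c) a')
| r_pairR : forall a c c', bval a -> tred c c' -> tred (Pair a c) (smap (Pair a) c')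
| r_letc  : forall x y u u' b, tred u u' -> tred (Let x y u b) (smap (fun h => Let x y h b) u').

(* A superposition in canonical form  sum_i a_i t_i + sum_j b_j v_j  (terms pairwise
   distinct up to ≡, coefficients nonzero) reduces to sum_i a_i s_i + sum_j b_j v_j
   when each t_i reduces to s_i; reduction is closed under ≡. *)
Definition red (s r : sup) : Prop :=
  exists (l : list (algC * term * sup)) (m : list (algC * term)),
    sequiv s (SAdd (tsum (map (fun p => (p.1.1, p.1.2)) l)) (tsum m)) /\
    sequiv r (SAdd (ssum (map (fun p => (p.1.1, p.2)) l)) (tsum m)) /\
    (forall p, List.In p l -> tred p.1.2 p.2 /\ p.1.1 != 0) /\
    (forall p, List.In p m -> bval p.2 /\ p.1 != 0) /\
    ForallOrdPairs (fun a c => ~ teq a c) (map (fun p => p.1.2) l ++ map snd m).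

Inductive reds : sup -> sup -> Prop :=
| reds_refl : forall s, reds s s
| reds_step : forall s r q, red s r -> reds r q -> reds s q.

Definition delta (t u : term) : algC :=
  if excluded_middle_informative (teq t u) then 1 else 0.
Fixpoint ipR (t : term) (w : sup) : algC :=
  match w with
  | STm u => delta t u
  | SZero => 0
  | SScale b w' => b * ipR t w'
  | SAdd w1 w2 => ipR t w1 + ipR t w2
  end.
Fixpoint ip (v w : sup) : algC :=
  match v with
  | STm t => ipR t w
  | SZero => 0
  | SScale a v' => a^* * ip v' w
  | SAdd v1 v2 => ip v1 w + ip v2 w
  end.

Definition cvalue (s : sup) : Prop :=
  exists s', sequiv s s' /\ closed_s s' /\ syn_value s'.
Definition S1 (s : sup) : Prop := cvalue s /\ `|ip s s| ^+ 2 = 1.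

Definition flat (S : sup -> Prop) (b : term) : Prop :=
  exists v, S v /\ bval b /\ ip (STm b) v != 0.
Definition span (S : sup -> Prop) (s : sup) : Prop :=
  exists l : list (algC * sup), (forall p, List.In p l -> S p.2) /\ sequiv s (ssum l).

Definition realizes (t : sup) (S : sup -> Prop) : Prop :=
  exists v v', reds t v /\ sequiv v v' /\ S v'.

Inductive ty : Type :=
| TVar    : nat -> ty
| TLin    : ty -> ty -> ty
| TArr    : ty -> ty -> ty
| TProd   : ty -> ty -> ty
| TBool   : ty
| TSharp  : ty -> ty
| TPar    : ty -> ty
| TForall : nat -> ty -> ty.

Definition env := nat -> sup -> Prop.
Definition env0 : env := fun _ _ => False.
Definition upd (tau : env) (X : nat) (R : sup -> Prop) : env :=
  fun Y => if Y == X then R else tau Y.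

Fixpoint sem (A : ty) (tau : env) : sup -> Prop :=
  match A with
  | TVar X => tau X
  | TBool => fun s => sequiv s (STm Ket0) \/ sequiv s (STm Ket1)
  | TSharp A' => fun s => span (sem A' tau) s /\ S1 s
  | TPar A' => sem A' tau
  | TLin A1 A2 => fun s => exists x b, closed_t (Lam x b) /\ sequiv s (STm (Lam x b)) /\
        forall v, sem A1 tau v -> realizes (app_sup (Lam x b) v) (sem A2 tau)
  | TArr A1 A2 => fun s => exists x b, closed_t (Lam x b) /\ sequiv s (STm (Lam x b)) /\
        forall v, flat (sem A1 tau) v -> realizes (STm (App (Lam x b) v)) (sem A2 tau)
  | TProd A1 A2 => fun s => exists v w, sem A1 tau v /\ sem A2 tau w /\ sequiv s (pair_sup v w)
  | TForall X A' => fun s => forall R : sup -> Prop, (forall u, R u -> S1 u) ->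
        sem A' (upd tau X R) s
  end.

(* B^1 = B, B^(m+1) = B x B^m  (the value at m = 0 is irrelevant) *)
Fixpoint tyBn (m : nat) : ty :=
  match m with
  | 0 => TBool
  | S m' => match m' with
            | 0 => TBool
            | S _ => TProd TBool (tyBn m')
            end
  end.

From Stdlib Require Import Classical ClassicalEpsilon List.
From mathcomp Require Import all_boot all_order all_algebra all_field.
From mathcomp Require Import zify ring.
Set Implicit Arguments. Unset Strict Implicit. Unset Printing Implicit Defensive.
Import Order.TTheory GRing.Theory Num.Theory.
Local Open Scope ring_scope.

(* Reduction is deterministic and linear, so a realizer L of the type sends the
   basis kets |i> to eventual outputs o_i and every unit superposition
   sum_i y_i |i> to the corresponding superposition of the o_i.  Reading off the
   coefficients of the |a>|b> in the o_i gives 2^(n+k) matrices c_i of size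
   2^n x 2^k such that every unit combination sum_i y_i c_i is a product u w^T
   with u, w nonzero.  Such combinations are then never zero, so the linear map
   y |-> sum_i y_i c_i is injective between spaces of equal dimension, hence
   onto; but a preimage of the entangled matrix |00> + |11>, once normalised,
   would have to be a product, which its nonvanishing 2x2 minor forbids. *)

(** * Unit superpositions of matrices that are all of rank one *)

Definition rank_one (R : nzRingType) (P Q : nat) (M : 'M[R]_(P, Q)) :=
  exists (u : 'cV_P) (w : 'rV_Q), [/\ u != 0, w != 0 & M = u *m w].

Lemma col_mul_row_neq0 (R : idomainType) (P Q : nat) (u : 'cV[R]_P) (w : 'rV_Q) :
  u != 0 -> w != 0 -> u *m w != 0.
Proof.
case/cV0Pn => i ui; case/rV0Pn => j wj; apply/matrix0Pn; exists i, j.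
by rewrite !mxE big_ord1 mulf_neq0.
Qed.

Lemma col_mul_row_minor (R : comNzRingType) (P Q : nat) (u : 'cV[R]_P) (w : 'rV_Q)
    i i' j j' :
  (u *m w) i j * (u *m w) i' j' = (u *m w) i j' * (u *m w) i' j.
Proof. rewrite !mxE !big_ord1; ring. Qed.

Lemma rank_one_neq0 (R : idomainType) (P Q : nat) (M : 'M[R]_(P, Q)) :
  rank_one M -> M != 0.
Proof. by case=> u [w [u0 w0 ->]]; apply: col_mul_row_neq0. Qed.

Definition unit_vector (N : nat) (y : 'rV[algC]_N) := \sum_i (y 0 i)^* * y 0 i = 1.

Lemma unit_vector_scale (N : nat) (x : 'rV[algC]_N) :
  x != 0 -> exists2 r : algC, r != 0 & unit_vector (r^-1 *: x).
Proof.
case/rV0Pn=> i0 xi0.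
set s := \sum_i (x 0 i)^* * x 0 i.
have s_gt0 : 0 < s.
  rewrite /s (bigD1 i0) //= ltr_wpDr 1?mulrC ?mul_conjC_gt0 //.
  by apply: sumr_ge0 => i _; rewrite mulrC mul_conjC_ge0.
have r_gt0 : 0 < sqrtC s by rewrite sqrtC_gt0.
exists (sqrtC s); first by rewrite gt_eqF.
have r_conj : (sqrtC s)^-1^* = (sqrtC s)^-1 by rewrite geC0_conj // invr_ge0 ltW.
rewrite /unit_vector.
under eq_bigr => i _ do rewrite mxE rmorphM /= r_conj mulrACA.
by rewrite -mulr_sumr -invfM -expr2 sqrtCK mulVf // gt_eqF.
Qed.

Section Entanglement.

Variables (P Q N : nat) (c : 'I_N -> 'M[algC]_(P, Q)).

Definition superpose (y : 'rV_N) : 'M_(P, Q) := \sum_i y 0 i *: c i.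

Lemma superposeZ a y : superpose (a *: y) = a *: superpose y.
Proof.
by rewrite /superpose scaler_sumr; apply: eq_bigr => i _; rewrite mxE scalerA.
Qed.

Hypothesis unit_rank_one : forall y, unit_vector y -> rank_one (superpose y).

Lemma superpose_eq0 y : superpose y = 0 -> y = 0.
Proof.
move=> y0; apply/eqP; apply: contraT => /unit_vector_scale[r r0 /unit_rank_one].
by rewrite superposeZ y0 scaler0 => /rank_one_neq0; rewrite eqxx.
Qed.

Hypothesis dim_N : N = (P * Q)%N.

Lemma superpose_onto M : exists y, superpose y = M.
Proof.
pose T := \matrix_i mxvec (c i).
have superposeE y : mxvec (superpose y) = y *m T.
  by rewrite mulmx_sum_row linear_sum; apply: eq_bigr => i _; rewrite linearZ rowK.
have T_free : row_free T.
  apply/inj_row_free => y; rewrite -superposeE => /eqP.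
  by rewrite raddf_eq0 //; [move/eqP; apply: superpose_eq0 | apply: can_inj mxvecK].
have T_full : row_full T by rewrite /row_full (eqP T_free) dim_N.
have /submxP[y My] : (mxvec M <= T)%MS by apply: submx_full.
by exists y; apply: (can_inj mxvecK); rewrite superposeE.
Qed.

Theorem no_entangling_superposition (i0 i1 : 'I_P) (j0 j1 : 'I_Q) :
  i0 != i1 -> j0 != j1 -> False.
Proof.
move=> i01 j01.
have [y By] := superpose_onto (delta_mx i0 j0 + delta_mx i1 j1).
have /unit_vector_scale[r r0] : y != 0.
  apply/eqP => y0; move/matrixP/(_ i0 j0): By.
  rewrite y0 /superpose big1 => [|i _]; last by rewrite mxE scale0r.
  by rewrite !mxE !eqxx (negPf i01) addr0 => /eqP; rewrite eq_sym oner_eq0.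
move/unit_rank_one; rewrite superposeZ By => -[u [w [_ _ uw]]].
have := col_mul_row_minor u w i0 i1 j0 j1; rewrite -uw !mxE !eqxx.
rewrite (negPf i01) (negPf j01) eq_sym (negPf i01) eq_sym (negPf j01) /=.
by rewrite !(addr0, add0r, mulr1, mulr0) => /eqP; rewrite mulf_eq0 invr_eq0 (negPf r0).
Qed.

End Entanglement.

(** * The shape of a term is invariant under the vector-space congruence *)

Scheme teq_mut := Induction for teq Sort Prop
with sequiv_mut := Induction for sequiv Sort Prop.
Scheme term_mut := Induction for term Sort Prop
with sup_mut := Induction for sup Sort Prop.

Fixpoint shape (t : term) : term :=
  match t with
  | Var x => Var x | Ket0 => Ket0 | Ket1 => Ket1
  | If g _ _ => If (shape g) SZero SZero
  | Lam x _ => Lam x SZero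
  | App a c => App (shape a) (shape c)
  | Pair a c => Pair (shape a) (shape c)
  | Let x y u _ => Let x y (shape u) SZero
  end.

(* The vector-space axioms only act on superposition positions, which [shape]
   erases. *)
Definition similar (t u : term) : Prop :=
  shape t = shape u /\
  match t, u with
  | Lam _ b, Lam _ b' => sequiv b b'
  | Pair a c, Pair a' c' => teq a a' /\ teq c c'
  | _, _ => True
  end.

Lemma similar_sym t u : similar t u -> similar u t.
Proof.
move=> [Etu Hbody]; split => //.
destruct t; destruct u => //; first by apply: seq_sym.
by case: Hbody => ? ?; split; apply: teq_sym.
Qed.

Lemma similar_trans t u w : similar t u -> similar u w -> similar t w.
Proof.
move=> [Etu Htu] [Euw Huw]; split; first by rewrite Etu.
destruct t; destruct u => //; destruct w => //; simpl in *; try discriminate.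
- by apply: seq_trans Htu Huw.
- by case: Htu => ? ?; case: Huw => ? ?; split; apply: teq_trans; eauto.
Qed.

Lemma teq_similar t u : teq t u -> similar t u.
Proof.
induction 1.
- by split => //; case: t => //= *; [apply: seq_refl | split; apply: teq_refl].
- exact: similar_sym.
- exact: similar_trans IHteq1 IHteq2.
- by split => //=; case: IHteq => ->.
- by split.
- by split => //=; case: IHteq1 => ->; case: IHteq2 => ->.
- by split => //=; case: IHteq1 => ->; case: IHteq2 => ->.
- by split => //=; case: IHteq => ->.
Qed.

Fixpoint pure_ket (t : term) : bool :=
  match t with
  | Ket0 | Ket1 => true
  | Pair a c => pure_ket a && pure_ket c
  | _ => false
  end.

Lemma pure_ket_shape k : pure_ket k -> shape k = k.
Proof. by elim: k => //= a IHa c IHc /andP[ka kc]; rewrite IHa // IHc. Qed.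

Lemma shape_eq_pure_ket k u : pure_ket k -> shape u = k -> u = k.
Proof.
elim: k u => //=; try by case.
move=> a IHa c IHc [] //= a' c' /andP[ka kc] [Ea Ec].
by rewrite (IHa _ ka Ea) (IHc _ kc Ec).
Qed.

Lemma teq_pure_ket k u : pure_ket k -> teq k u <-> k = u.
Proof.
move=> kk; split=> [/teq_similar[Eku _] | <-]; last exact: teq_refl.
by apply/esym/shape_eq_pure_ket; rewrite // -Eku pure_ket_shape.
Qed.

Lemma teq_Lam_inv x b a : teq (Lam x b) a -> exists2 b', a = Lam x b' & sequiv b b'.
Proof. by case/teq_similar; case: a => //= y b' [<-] Eb; exists b'. Qed.

Lemma teq_Pair_inv v w a : teq (Pair v w) a ->
  exists v' w', [/\ a = Pair v' w', teq v v' & teq w w'].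
Proof. by case/teq_similar; case: a => //= v' w' _ [? ?]; exists v', w'. Qed.

Lemma shape_bval t u : shape t = shape u -> bval t -> bval u.
Proof.
elim: t u => //=; try by case.
- by move=> ? ? [].
- by move=> a IHa c IHc [] //= a' c' [Ea Ec] [ba bc]; split; eauto.
Qed.

Lemma teq_bval t u : teq t u -> bval t -> bval u.
Proof. by case/teq_similar => /shape_bval. Qed.

(** * Reduction is deterministic and compatible with the congruence *)

Lemma tred_not_bval t s : tred t s -> ~ bval t.
Proof. by elim=> /=; tauto. Qed.

Ltac no_tred := match goal with
 | H : tred ?t _ |- _ =>
     solve [ inversion H | exfalso; apply: (tred_not_bval H); simpl; tauto ]
 end.

Lemma tred_deterministic t s1 s2 : tred t s1 -> tred t s2 -> s1 = s2.
Proof.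
move=> H; elim: H s2 => *;
  match goal with H : tred _ _ |- _ => inversion H; subst end;
  try reflexivity; try no_tred;
  match goal with IH : forall s, tred ?t s -> _ = s, H : tred ?t ?s |- _ =>
    by rewrite (IH _ H) end.
Qed.

Lemma subst_congr :
  (forall t t', teq t t' -> forall x v, teq (subst_t t x v) (subst_t t' x v)) /\
  (forall s s', sequiv s s' -> forall x v, sequiv (subst_s s x v) (subst_s s' x v)).
Proof.
split => [t t' H | s s' H].
- induction H using teq_mut with
    (P0 := fun s s' _ => forall x v, sequiv (subst_s s x v) (subst_s s' x v));
  intros; simpl; try by econstructor; eauto.
  + by case: (_ == _); constructor; eauto.
  + by case: (_ || _); constructor; eauto.
- induction H using sequiv_mut with
    (P := fun t t' _ => forall x v, teq (subst_t t x v) (subst_t t' x v));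
  intros; simpl; try by econstructor; eauto.
  + by case: (_ == _); constructor; eauto.
  + by case: (_ || _); constructor; eauto.
Qed.

Lemma subst_s_teq x v v' s : teq v v' -> sequiv (subst_s s x v) (subst_s s x v').
Proof.
move=> Hv; have Ht t : teq (subst_t t x v) (subst_t t x v').
  induction t using term_mut with
    (P0 := fun s => sequiv (subst_s s x v) (subst_s s x v'));
  simpl; try by econstructor; eauto.
  - by case: (_ == _) => //; apply: teq_refl.
  - by case: (_ == _); constructor; eauto; apply: seq_refl.
  - by case: (_ || _); constructor; eauto; apply: seq_refl.
elim: s => /= [t | | a s | s1 IH1 s2 IH2]; first exact/seq_STm/Ht.
- exact: seq_refl.
- exact: seq_Scale.
- exact: seq_Add.
Qed.

Lemma subst_sequiv b b' x v v' : sequiv b b' -> teq v v' ->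
  sequiv (subst_s b x v) (subst_s b' x v').
Proof.
by move=> Hb Hv; apply: seq_trans (proj2 subst_congr _ _ Hb x v) (subst_s_teq _ _ Hv).
Qed.

Lemma smap_sequiv f s s' : (forall t t', teq t t' -> teq (f t) (f t')) ->
  sequiv s s' -> sequiv (smap f s) (smap f s').
Proof. by move=> Hf; induction 1; simpl; try by econstructor; eauto. Qed.

Lemma smap_ext f f' s : (forall t, teq (f t) (f' t)) -> sequiv (smap f s) (smap f' s).
Proof. by move=> Hf; elim: s => /= *; econstructor; eauto. Qed.

Lemma smap_congr f f' s s' : (forall t t', teq t t' -> teq (f t) (f t')) ->
  (forall t, teq (f t) (f' t)) -> sequiv s s' -> sequiv (smap f s) (smap f' s').
Proof. by move=> Hf Hff' Hs; apply: seq_trans (smap_sequiv Hf Hs) (smap_ext _ Hff'). Qed.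

Definition tred_sim (t t' : term) :=
  forall s, tred t s -> exists2 s', tred t' s' & sequiv s s'.

Ltac apply_sim F := match goal with H : tred _ _ |- _ => case: (F _ H) end.

Lemma tred_sim_If g g' s1 s1' s2 s2' : teq g g' -> tred_sim g g' ->
  sequiv s1 s1' -> sequiv s2 s2' -> tred_sim (If g s1 s2) (If g' s1' s2').
Proof.
move=> Hg Fg H1 H2 s Hs; inversion Hs; subst.
- by move/(@teq_pure_ket Ket0 _ isT): Hg => <-; exists s1'; first exact: r_if0.
- by move/(@teq_pure_ket Ket1 _ isT): Hg => <-; exists s2'; first exact: r_if1.
- apply_sim Fg => g0 Hr E; eexists; first exact: r_ifc Hr.
  by apply: smap_congr E => *; apply: teq_If; by [|apply: teq_refl|apply: seq_refl].
Qed.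

Lemma tred_sim_App a a' c c' : teq a a' -> teq c c' -> tred_sim a a' -> tred_sim c c' ->
  tred_sim (App a c) (App a' c').
Proof.
move=> Ha Hc Fa Fc s Hs; inversion Hs; subst.
- have [b' -> Eb] := teq_Lam_inv Ha; eexists; first exact/r_beta/(teq_bval Hc).
  exact: subst_sequiv.
- apply_sim Fc => c0 Hr E; eexists; first exact: r_appR Hr.
  by apply: smap_congr E => *; apply: teq_App => //; apply: teq_refl.
- apply_sim Fa => a0 Hr E; eexists; first exact: r_appL (teq_bval Hc _) Hr.
  by apply: smap_congr E => *; apply: teq_App => //; apply: teq_refl.
Qed.

Lemma tred_sim_Pair a a' c c' : teq a a' -> teq c c' -> tred_sim a a' -> tred_sim c c' ->
  tred_sim (Pair a c) (Pair a' c').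
Proof.
move=> Ha Hc Fa Fc s Hs; inversion Hs; subst.
- apply_sim Fa => a0 Hr E; eexists; first exact: r_pairL Hr.
  by apply: smap_congr E => *; apply: teq_Pair => //; apply: teq_refl.
- apply_sim Fc => c0 Hr E; eexists; first exact: r_pairR (teq_bval Ha _) Hr.
  by apply: smap_congr E => *; apply: teq_Pair => //; apply: teq_refl.
Qed.

Lemma tred_sim_Let x y u u' b b' : teq u u' -> tred_sim u u' -> sequiv b b' ->
  tred_sim (Let x y u b) (Let x y u' b').
Proof.
move=> Hu Fu Hb s Hs; inversion Hs; subst.
- have [v' [w' [-> Hv Hw]]] := teq_Pair_inv Hu; eexists.
    exact: r_let (teq_bval Hv _) (teq_bval Hw _).
  by apply: subst_sequiv => //; apply: subst_sequiv.
- apply_sim Fu => u0 Hr E; eexists; first exact: r_letc Hr.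
  by apply: smap_congr E => *; apply: teq_Let; by [|apply: teq_refl|apply: seq_refl].
Qed.

Lemma teq_tred_sim t t' : teq t t' -> tred_sim t t' /\ tred_sim t' t.
Proof.
have sim_trans t1 t2 t3 : tred_sim t1 t2 -> tred_sim t2 t3 -> tred_sim t1 t3.
  move=> F12 F23 s /F12[s2 /F23[s3 H3 E23] E12].
  by exists s3 => //; apply: seq_trans E12 E23.
induction 1.
- by split=> s Hs; exists s => //; apply: seq_refl.
- by case: IHteq.
- by case: IHteq1 => F1 G1; case: IHteq2 => F2 G2; split; apply: sim_trans; eauto.
- case: IHteq => F G; split; apply: tred_sim_If => //;
    by [apply: teq_sym | apply: seq_sym].
- by split=> s Hs; inversion Hs.
- case: IHteq1 => F1 G1; case: IHteq2 => F2 G2.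
  by split; apply: tred_sim_App => //; apply: teq_sym.
- case: IHteq1 => F1 G1; case: IHteq2 => F2 G2.
  by split; apply: tred_sim_Pair => //; apply: teq_sym.
- case: IHteq => F G; split; apply: tred_sim_Let => //;
    by [apply: teq_sym | apply: seq_sym].
Qed.

(** * A deterministic step function *)

Definition step_t (t : term) : sup :=
  match excluded_middle_informative (exists s, tred t s) with
  | left H => proj1_sig (constructive_indefinite_description _ H)
  | right _ => STm t
  end.

Definition step (s : sup) : sup := sbind step_t s.

Lemma step_t_tred t s : tred t s -> step_t t = s.
Proof.
move=> H; rewrite /step_t; case: excluded_middle_informative => [H'|[]]; last by exists s.
by case: constructive_indefinite_description => s' /= /tred_deterministic; apply.
Qed.

Lemma step_t_irred t : ~ (exists s, tred t s) -> step_t t = STm t.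
Proof. by move=> H; rewrite /step_t; case: excluded_middle_informative. Qed.

Lemma step_t_bval t : bval t -> step_t t = STm t.
Proof. by move=> H; apply: step_t_irred => -[s /tred_not_bval]. Qed.

Lemma step_t_teq t t' : teq t t' -> sequiv (step_t t) (step_t t').
Proof.
move=> E; have [F G] := teq_tred_sim E.
case: (classic (exists s, tred t s)) => [[s Hs]|Hn].
  by have [s' Hs' Es] := F _ Hs; rewrite (step_t_tred Hs) (step_t_tred Hs').
have Hn' : ~ (exists s, tred t' s) by case=> s' /G[s Hs _]; apply: Hn; exists s.
by rewrite (step_t_irred Hn) (step_t_irred Hn'); apply: seq_STm.
Qed.

Lemma sbind_sequiv f s s' : (forall t t', teq t t' -> sequiv (f t) (f t')) ->
  sequiv s s' -> sequiv (sbind f s) (sbind f s').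
Proof.
move=> Hf; elim=> /= *; try first [ by apply: Hf | by apply: seq_sym
  | by apply: seq_trans; eauto | by apply: seq_Scale | by apply: seq_Add ].
- exact: seq_refl.
- exact: seq_comm.
- exact: seq_assoc.
- exact: seq_zeroN.
- exact: seq_scale0.
- exact: seq_scale1.
- exact: seq_scaleM.
- exact: seq_scaleDl.
- exact: seq_scaleDr.
Qed.

Lemma sbind_ext f f' s :
  (forall t, sequiv (f t) (f' t)) -> sequiv (sbind f s) (sbind f' s).
Proof.
move=> H; elim: s => /= [t | | a s | s1 IH1 s2 IH2]; first exact: H.
- exact: seq_refl.
- exact: seq_Scale.
- exact: seq_Add.
Qed.

Lemma sbind_assoc g h s : sbind g (sbind h s) = sbind (fun t => sbind g (h t)) s.
Proof. by elim: s => //= [a s -> | s1 -> s2 ->]. Qed.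

Lemma smap_sbind f s : smap f s = sbind (fun t => STm (f t)) s.
Proof. by elim: s => //= [a s -> | s1 -> s2 ->]. Qed.

Lemma iter_step_sbind M h s :
  iter M step (sbind h s) = sbind (fun t => iter M step (h t)) s.
Proof.
elim: M => /= [|M IH]; first by elim: s => //= [a s -> | s1 -> s2 ->].
by rewrite IH /step sbind_assoc.
Qed.

Lemma step_sequiv s s' : sequiv s s' -> sequiv (step s) (step s').
Proof. by apply: sbind_sequiv => t t'; apply: step_t_teq. Qed.

Lemma iter_step_sequiv M s s' : sequiv s s' -> sequiv (iter M step s) (iter M step s').
Proof. by elim: M => //= M IH /IH; apply: step_sequiv. Qed.

Lemma step_value s : syn_value s -> step s = s.
Proof.
rewrite /step; elim: s => /= [t | | a s IH | s1 IH1 s2 IH2 [v1 v2]].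
- exact: step_t_bval.
- by [].
- by move/IH ->.
- by rewrite IH1 // IH2.
Qed.

Lemma red_step s r : red s r -> sequiv r (step s).
Proof.
move=> [l [m [Hs [Hr [Hl [Hm _]]]]]].
apply: seq_trans Hr _; apply: seq_sym; apply: seq_trans (step_sequiv Hs) _.
rewrite /step /=; clear Hs; apply: seq_Add.
- have -> : sbind step_t (tsum [seq (p.1.1, p.1.2) | p <- l]) =
            ssum [seq (p.1.1, p.2) | p <- l].
    elim: l Hl => //= p l IH Hl.
    rewrite (step_t_tred (proj1 (Hl p (or_introl erefl)))) IH // => q Hq.
    by apply: Hl; right.
  exact: seq_refl.
- have -> : sbind step_t (tsum m) = tsum m.
    elim: m Hm => //= p m IH Hm.
    rewrite (step_t_bval (proj1 (Hm p (or_introl erefl)))) IH // => q Hq.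
    by apply: Hm; right.
  exact: seq_refl.
Qed.

Lemma reds_iter_step s v : reds s v -> exists m, sequiv (iter m step s) v.
Proof.
elim=> [s' | s' r q Hr _ [m Hm]]; first by exists 0%N; apply: seq_refl.
exists m.+1; rewrite iterSr; apply: seq_trans Hm.
exact/iter_step_sequiv/seq_sym/red_step.
Qed.

Lemma iter_step_value v v' M : sequiv v v' -> syn_value v' -> sequiv (iter M step v) v.
Proof.
move=> E Vv; elim: M => /= [|M IH]; first exact: seq_refl.
apply: seq_trans (step_sequiv IH) _; apply: seq_trans (step_sequiv E) _.
by rewrite step_value //; apply: seq_sym.
Qed.

(** * Inner products *)

Lemma delta_refl t : delta t t = 1.
Proof.
by rewrite /delta; case: excluded_middle_informative => // -[]; apply: teq_refl.
Qed.

Lemma delta_teq t t' u u' : teq t t' -> teq u u' -> delta t u = delta t' u'.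
Proof.
move=> Et Eu; have E : teq t u <-> teq t' u'.
  by split=> H; [apply: teq_trans (teq_sym Et) (teq_trans H Eu)
                | apply: teq_trans Et (teq_trans H (teq_sym Eu))].
rewrite /delta; do 2 case: excluded_middle_informative => //.
all: by move=> H1 H2; exfalso; tauto.
Qed.

Lemma ipR_sequiv t w w' : sequiv w w' -> ipR t w = ipR t w'.
Proof.
elim=> //=; try congruence.
- by move=> *; apply: delta_teq (teq_refl t) _.
- by move=> *; rewrite addrC.
- by move=> *; rewrite addrA.
- by move=> *; rewrite add0r.
- by move=> *; rewrite mul0r.
- by move=> *; rewrite mul1r.
- by move=> *; rewrite mulrA.
- by move=> *; rewrite mulrDl.
- by move=> *; rewrite mulrDr.
Qed.

Lemma ipR_teq t t' w : teq t t' -> ipR t w = ipR t' w.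
Proof.
move=> E; elim: w => /= [u | | a w -> | w1 -> w2 ->] //.
exact: delta_teq E (teq_refl u).
Qed.

Lemma ip_sequiv_l v v' w : sequiv v v' -> ip v w = ip v' w.
Proof.
elim=> //=; try congruence.
- by move=> *; apply: ipR_teq.
- by move=> *; rewrite addrC.
- by move=> *; rewrite addrA.
- by move=> *; rewrite add0r.
- by move=> *; rewrite conjC0 mul0r.
- by move=> *; rewrite conjC1 mul1r.
- by move=> *; rewrite mulrA rmorphM.
- by move=> *; rewrite rmorphD mulrDl.
- by move=> *; rewrite mulrDr.
Qed.

Lemma ip_ssum l w : ip (ssum l) w = \sum_(p <- l) (p.1)^* * ip p.2 w.
Proof. by elim: l => /= [|p l ->]; rewrite ?big_nil ?big_cons. Qed.

Lemma ipR_ssum t l : ipR t (ssum l) = \sum_(p <- l) p.1 * ipR t p.2.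
Proof. by elim: l => /= [|p l ->]; rewrite ?big_nil ?big_cons. Qed.

Lemma sbind_ssum f l : sbind f (ssum l) = ssum [seq (p.1, sbind f p.2) | p <- l].
Proof. by elim: l => //= p l ->. Qed.

Lemma pair_sup_sequiv u u' w w' : sequiv u u' -> sequiv w w' ->
  sequiv (pair_sup u w) (pair_sup u' w').
Proof.
move=> Hu Hw; apply: seq_trans (sbind_sequiv _ Hu) _.
- by move=> t t' E; apply: smap_ext => c; apply: teq_Pair => //; apply: teq_refl.
- apply: sbind_ext => t; apply: smap_sequiv Hw => c c' E.
  by apply: teq_Pair => //; apply: teq_refl.
Qed.

Lemma syn_value_sbind f s : syn_value s -> (forall t, bval t -> syn_value (f t)) ->
  syn_value (sbind f s).
Proof. by move=> Hs Hf; elim: s Hs => /=; intuition. Qed.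

Lemma delta_Pair ka kb t t' : pure_ket ka -> pure_ket kb ->
  delta (Pair ka kb) (Pair t t') = delta ka t * delta kb t'.
Proof.
move=> ka_ket kb_ket; have kab_ket : pure_ket (Pair ka kb) by rewrite /= ka_ket kb_ket.
have E : teq (Pair ka kb) (Pair t t') <-> teq ka t /\ teq kb t'.
  rewrite (teq_pure_ket _ kab_ket) (teq_pure_ket _ ka_ket) (teq_pure_ket _ kb_ket).
  by split=> [[-> ->] | [-> ->]].
rewrite /delta; do 3 case: excluded_middle_informative => /= *;
  rewrite ?mulr1 ?mulr0 //; exfalso; tauto.
Qed.

Lemma ipR_pair_sup ka kb u w : pure_ket ka -> pure_ket kb ->
  ipR (Pair ka kb) (pair_sup u w) = ipR ka u * ipR kb w.
Proof.
move=> ka_ket kb_ket; rewrite /pair_sup.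
elim: u => /= [t | | a u -> | u1 -> u2 ->]; [| by rewrite mul0r | by rewrite mulrA
  | by rewrite mulrDl].
elim: w => /= [t' | | b w -> | w1 -> w2 ->]; [| by rewrite mulr0 | by rewrite mulrCA
  | by rewrite mulrDr].
exact: delta_Pair.
Qed.

(** * Basis kets *)

Definition bit (i : nat) : term := if odd i then Ket1 else Ket0.

(* The first qubit of [ket m i] carries the lowest bit of [i] (the reverse of
   the paper's |i>, which is immaterial here); like [tyBn], [ket] does not
   distinguish [m = 0] from [m = 1]. *)
Fixpoint ket (m i : nat) : term :=
  match m with
  | 0 => bit i
  | S m' => match m' with 0 => bit i | S _ => Pair (bit i) (ket m' i./2) end
  end.

Lemma pure_ket_ket m i : pure_ket (ket m i).
Proof. by elim: m i => [|[|m] IH] i /=; rewrite /bit ?IH; case: odd. Qed.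

Lemma bval_bit i : bval (bit i).
Proof. by rewrite /bit; case: odd. Qed.

Lemma bval_ket m i : bval (ket m i).
Proof. by elim: m i => [|[|m] IH] i; try split; [apply: bval_bit..|apply: IH]. Qed.

Lemma closed_ket m i : closed_t (ket m i).
Proof.
elim: m i => [|[|m] IH] i; rewrite /closed_t /= /bit; try by case: odd.
by move: (IH i./2); rewrite /closed_t => ->; case: odd.
Qed.

Lemma sem_bit i : sem TBool env0 (STm (bit i)).
Proof. by rewrite /bit; case: odd; [right | left]; apply: seq_refl. Qed.

Lemma sem_ket m i : sem (tyBn m) env0 (STm (ket m i)).
Proof.
elim: m i => [|[|m] IH] i; try exact: sem_bit.
exists (STm (bit i)), (STm (ket m.+1 i./2)).
by split; last split; [apply: sem_bit | apply: IH | apply: seq_refl].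
Qed.

Lemma ket_inj m i j : (i < 2 ^ m.+1)%N -> (j < 2 ^ m.+1)%N ->
  ket m.+1 i = ket m.+1 j -> i = j.
Proof.
elim: m i j => [|m IH] i j /=.
  by rewrite /bit expn1; case: i => [|[|i]] //; case: j => [|[|j]].
move=> Hi Hj [Hbit Hket].
have Ho : odd i = odd j by move: Hbit; rewrite /bit; do 2 case: odd.
have Hh : i./2 = j./2 by apply: IH Hket; rewrite -divn2 ltn_divLR // -expnSr.
by rewrite -(odd_double_half i) -(odd_double_half j) Ho Hh.
Qed.

Lemma delta_ket m i j : (i < 2 ^ m.+1)%N -> (j < 2 ^ m.+1)%N ->
  delta (ket m.+1 i) (ket m.+1 j) = (i == j)%:R.
Proof.
move=> Hi Hj; case: eqP => [-> | ij]; first exact: delta_refl.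
rewrite /delta; case: excluded_middle_informative => // E; case: ij.
by apply: ket_inj Hi Hj _; apply/teq_pure_ket; first exact: pure_ket_ket.
Qed.

Lemma sem_Bn_ket m s : sem (tyBn m.+1) env0 s ->
  exists2 i, (i < 2 ^ m.+1)%N & sequiv s (STm (ket m.+1 i)).
Proof.
elim: m s => [|m IH] s /=; first by case=> E; [exists 0%N | exists 1%N].
move=> [v [w [Hv [/IH[j Hj Ej] E]]]].
have [b Eb] : exists b : bool, sequiv v (STm (bit b)).
  by case: Hv => E'; [exists false | exists true].
exists (b + j.*2)%N.
  by rewrite expnS; move: Hj; set X := (2 ^ m.+1)%N; case: b {Eb} => /=; lia.
apply: seq_trans E _.
have -> : STm (Pair (bit (b + j.*2)) (ket m.+1 (b + j.*2)./2)) =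
          pair_sup (STm (bit b)) (STm (ket m.+1 j)).
  by rewrite /pair_sup /= half_bit_double /bit oddD odd_double addbF oddb.
exact: pair_sup_sequiv.
Qed.

Lemma sem_sharp_ket m i : sem (TSharp (tyBn m.+1)) env0 (STm (ket m.+1 i)).
Proof.
split; last split.
- exists [:: (1, STm (ket m.+1 i))]; split=> [p [<- | []] | /=]; first exact: sem_ket.
  by apply: seq_sym; apply: seq_trans (seq_comm _ _) _; apply: seq_trans (seq_zeroN _) _;
     apply: seq_scale1.
- exists (STm (ket m.+1 i)).
  by split; last split; [apply: seq_refl | apply: closed_ket | apply: bval_ket].
- by rewrite /= delta_refl normr1 expr1n.
Qed.

Definition ket_sup m (y : 'rV[algC]_(2 ^ m.+1)) : sup :=
  ssum [seq (y 0 i, STm (ket m.+1 i)) | i <- index_enum 'I_(2 ^ m.+1)].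

Lemma sem_sharp_ket_sup m (y : 'rV_(2 ^ m.+1)) :
  unit_vector y -> sem (TSharp (tyBn m.+1)) env0 (ket_sup y).
Proof.
move=> y_unit; split; last split.
- exists [seq (y 0 i, STm (ket m.+1 i)) | i <- index_enum 'I_(2 ^ m.+1)].
  by split=> [p /in_map_iff[i [<- _]] |]; [apply: sem_ket | apply: seq_refl].
- exists (ket_sup y); split; last split; first exact: seq_refl.
  + rewrite /closed_s /ket_sup; elim: (index_enum _) => //= i s ->.
    by rewrite andbT; apply: (closed_ket m.+1 i).
  + rewrite /ket_sup; elim: (index_enum _) => //= i s IH.
    by split=> //; apply: (bval_ket m.+1 i).
- suff -> : ip (ket_sup y) (ket_sup y) = 1 by rewrite normr1 expr1n.
  rewrite {1}/ket_sup ip_ssum big_map -y_unit; apply: eq_bigr => i _ /=; congr (_ * _).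
  rewrite /ket_sup ipR_ssum big_map (bigD1 i) //= delta_ket // eqxx mulr1 big1 ?addr0 //.
  by move=> j ji; rewrite delta_ket // (inj_eq val_inj) eq_sym (negPf ji) mulr0.
Qed.

Lemma ipR_iter_app_ket_sup m (y : 'rV_(2 ^ m.+1)) L M p :
  ipR p (iter M step (app_sup L (ket_sup y))) =
  \sum_i y 0 i * ipR p (iter M step (STm (App L (ket m.+1 i)))).
Proof.
by rewrite /app_sup smap_sbind iter_step_sbind /ket_sup sbind_ssum ipR_ssum !big_map.
Qed.

Definition ket_coords m (s : sup) : 'rV[algC]_(2 ^ m.+1) := \row_a ipR (ket m.+1 a) s.

Lemma sem_sharp_ket_coords_neq0 m s :
  sem (TSharp (tyBn m.+1)) env0 s -> ket_coords m s != 0.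
Proof.
move=> [[l [Hl El]] [_ s_unit]]; apply/eqP => s0.
suff ip0 : ip s s = 0.
  by move: s_unit; rewrite ip0 normr0 expr0n /= => /eqP; rewrite eq_sym oner_eq0.
rewrite (ip_sequiv_l _ El) ip_ssum; elim: l Hl {El} => [|p l IH] Hl; first exact: big_nil.
rewrite big_cons IH => [|q Hq]; last by apply: Hl; right.
have [a Ha Ep] := sem_Bn_ket (Hl p (or_introl erefl)).
move/matrixP/(_ 0 (Ordinal Ha)): s0; rewrite !mxE => coord0.
by rewrite (ip_sequiv_l _ Ep) /= coord0 mulr0 addr0.
Qed.

(** * Eventual outputs of a realizer *)

Lemma sem_sharp_prod_value A1 A2 o : sem (TProd (TSharp A1) (TSharp A2)) env0 o ->
  exists2 o', sequiv o o' & syn_value o'.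
Proof.
move=> [u [w [[_ [[u' [Eu [_ Vu]]] _]] [[_ [[w' [Ew [_ Vw]]] _]] E]]]].
exists (pair_sup u' w'); first exact: seq_trans E (pair_sup_sequiv Eu Ew).
by apply: syn_value_sbind => // t Ht; elim: w' Vw {Ew} => /=; intuition.
Qed.

Lemma realizes_iter_step_stable A1 A2 s :
  realizes s (sem (TProd (TSharp A1) (TSharp A2)) env0) ->
  exists o m, sem (TProd (TSharp A1) (TSharp A2)) env0 o /\
    forall M, (m <= M)%N -> sequiv (iter M step s) o.
Proof.
move=> [v [o [Hv [Evo Ho]]]].
have [m Hm] := reds_iter_step Hv; have [o' Eo' Vo'] := sem_sharp_prod_value Ho.
exists o, m; split=> // M mM; rewrite -(subnK mM) iterD.
apply: seq_trans (iter_step_sequiv _ Hm) (seq_trans _ Evo).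
exact: iter_step_value (seq_trans Evo Eo') Vo'.
Qed.

Lemma ipR_stable_superposition m L (o : 'I_(2 ^ m.+1) -> sup) (mo : 'I_(2 ^ m.+1) -> nat)
    y oy my p :
  (forall i M, (mo i <= M)%N -> sequiv (iter M step (STm (App L (ket m.+1 i)))) (o i)) ->
  (forall M, (my <= M)%N -> sequiv (iter M step (app_sup L (ket_sup y))) oy) ->
  ipR p oy = \sum_i y 0 i * ipR p (o i).
Proof.
move=> Ho Hy; pose M := (my + \max_i mo i)%N.
rewrite -(ipR_sequiv p (Hy M (leq_addr _ _))) ipR_iter_app_ket_sup.
apply: eq_bigr => i _; congr (_ * _); apply/ipR_sequiv/Ho.
by rewrite (leq_trans (leq_bigmax i)) // leq_addl.
Qed.

Lemma sharp_realizer_rank_one n k L :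
  (forall v, sem (TSharp (tyBn (n + k.+1).+1)) env0 v -> realizes (app_sup L v)
     (sem (TProd (TSharp (tyBn n.+1)) (TSharp (tyBn k.+1))) env0)) ->
  exists c : 'I_(2 ^ (n + k.+1).+1) -> 'M[algC]_(2 ^ n.+1, 2 ^ k.+1),
    forall y, unit_vector y -> rank_one (superpose c y).
Proof.
set m := (n + k.+1)%N => HL.
have [o [mo Ho]] : exists (o : 'I_(2 ^ m.+1) -> sup) (mo : 'I_(2 ^ m.+1) -> nat),
    forall i M, (mo i <= M)%N -> sequiv (iter M step (STm (App L (ket m.+1 i)))) (o i).
  have /choice[om Hom] i : exists om : sup * nat,
      forall M, (om.2 <= M)%N -> sequiv (iter M step (STm (App L (ket m.+1 i)))) om.1.
    have [o [mo [_ Hmo]]] := realizes_iter_step_stable (HL _ (sem_sharp_ket m i)).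
    by exists (o, mo).
  by exists (fun i => (om i).1), (fun i => (om i).2); apply: Hom.
exists (fun i => \matrix_(a, b) ipR (Pair (ket n.+1 a) (ket k.+1 b)) (o i)) => y y_unit.
have [oy [my [[u [w [Hu [Hw Eoy]]]] Hmy]]] :=
  realizes_iter_step_stable (HL _ (sem_sharp_ket_sup y_unit)).
exists (ket_coords n u)^T, (ket_coords k w); split.
- by rewrite trmx_eq0; apply: sem_sharp_ket_coords_neq0.
- exact: sem_sharp_ket_coords_neq0.
apply/matrixP => a b; rewrite summxE !mxE big_ord1 !mxE.
rewrite -ipR_pair_sup ?pure_ket_ket // -(ipR_sequiv _ Eoy).
by rewrite (ipR_stable_superposition _ Ho Hmy); apply: eq_bigr => i _; rewrite !mxE.
Qed.

Local Close Scope ring_scope.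

Theorem mainTheorem4 (n k : nat) (hn : (1 <= n)%N) (hk : (1 <= k)%N) :
  forall (x : nat) (b : sup), closed_t (Lam x b) ->
    ~ sem (TLin (TSharp (tyBn (n + k))) (TProd (TSharp (tyBn n)) (TSharp (tyBn k))))
          env0 (STm (Lam x b)).
Proof.
case: n hn => // n _; case: k hk => // k _ x b _ [x' [b' [_ [_ HL]]]].
have [c c_rank_one] := sharp_realizer_rank_one HL.
have two_le_pow2 j : 1 < 2 ^ j.+1 by rewrite -[1]/(2 ^ 0) ltn_exp2l.
apply: (no_entangling_superposition c_rank_one _
  (i0 := Ordinal (ltnW (two_le_pow2 n))) (i1 := Ordinal (two_le_pow2 n))
  (j0 := Ordinal (ltnW (two_le_pow2 k))) (j1 := Ordinal (two_le_pow2 k))) => //.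
by rewrite -expnD addSn.
Qed.
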